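(* Let $k$ be an $\mathbf{F}_p$-algebra, $m\in\mathbf{N}\cup\{\infty\}$, $A:=k[[\pi]]/(\pi^{m+1})$, and let $\phi:A\to\operatorname{HS}^m(k)[[\pi]]/(\pi^{m+1})$ be the ring homomorphism $\phi(\sum_ia_i\pi^i)=\sum_{n=0}^m\sum_{i=0}^nd^{[n-i]}a_i\,\pi^n$. Let $\overline{\phi}:\operatorname{HS}^m(A)\to\operatorname{HS}^m(k)$ be its transpose, i.e. the ring homomorphism with $\overline{\phi}(d^{[n]}a)$ equal to the coefficient of $\pi^n$ in $\phi(a)$. Let $\iota:\operatorname{HS}^m(k)\to\operatorname{HS}^m(A)$ be induced by $k\subset A$, let $J$ be the ideal of $\operatorname{HS}^m(A)$ generated by $d^{[n]}\pi^i-\delta_{ni}$ ($0\le n\le m$, $i\ge0$), and $\rho:\operatorname{HS}^m(k)\to\operatorname{HS}^m(A)/J$ the composite of $\iota$ with the quotient map. Then $\overline{\phi}\circ\iota=\mathrm{id}$, $\overline{\phi}$ vanishes on $J$ and so induces $\overline{\phi}^\#:\operatorname{HS}^m(A)/J\to\operatorname{HS}^m(k)$, and $\overline{\phi}^\#\circ\rho=\mathrm{id}$. Hence $\rho$ is injective, and therefore (being surjective) an isomorphism.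
   Context: For a ring $R$ and $m\in\mathbf{N}\cup\{\infty\}$, $\operatorname{HS}^m(R):=\mathbf{Z}[d^{[n]}a\mid a\in R,0\le n\le m]/\sim$, where $\sim$ is generated by $d^{[n]}(a+b)=d^{[n]}a+d^{[n]}b$, $d^{[n]}(ab)=\sum_{i+j=n}d^{[i]}a\,d^{[j]}b$, and $d^{[0]}1=1$; ring homomorphisms $\operatorname{HS}^m(A)\to S$ correspond to ring homomorphisms $A\to S[[\pi]]/(\pi^{m+1})$ via $a\mapsto\sum_nf(d^{[n]}a)\pi^n$. Here $\pi^{\infty+1}:=0$; $\delta_{ni}$ is the Kronecker delta; $a_i\in k$ are the coefficients of $a\in A$. It is known that $\rho$ is surjective. *)

From mathcomp Require Import all_boot all_algebra.
Import GRing.Theory.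
Local Open Scope ring_scope.

(* m : option nat;  Some M = the natural number M,  None = infinity. *)
Definition le_m (m : option nat) (n : nat) : bool :=
  if m is Some M then (n <= M)%N else true.

(* Formal expressions of the free commutative ring Z[d^[n] a | a : T, n : nat]. *)
Inductive hterm (T : Type) : Type :=
  | HVar of T & nat
  | HZero | HOne
  | HAdd of hterm T & hterm T
  | HOpp of hterm T
  | HMul of hterm T & hterm T.
Arguments HZero {T}.
Arguments HOne {T}.
Arguments HVar {T}.
Arguments HAdd {T}.
Arguments HOpp {T}.
Arguments HMul {T}.

Definition hsum {T} (s : seq (hterm T)) : hterm T := foldr (@HAdd T) (@HZero T) s.

Fixpoint hmap {T U : Type} (f : T -> nat -> hterm U) (t : hterm T) : hterm U :=
  match t with
  | HVar a n => f a n
  | HZero => HZero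
  | HOne => HOne
  | HAdd s u => HAdd (hmap f s) (hmap f u)
  | HOpp s => HOpp (hmap f s)
  | HMul s u => HMul (hmap f s) (hmap f u)
  end.

Section HS.
Variables (T : Type) (addT mulT : T -> T -> T) (oneT : T) (m : option nat).
(* extra equations (used to quotient by an ideal) *)
Variable E : hterm T -> hterm T -> Prop.

(* The congruence on hterm T whose quotient is HS^m(T) (modulo E):
   commutative ring axioms + the Hasse–Schmidt relations for 0 <= n <= m;
   generators d^[n] a with n > m are set to 0 (they are not generators of
   HS^m). *)
Inductive hs_eq : hterm T -> hterm T -> Prop :=
  | hs_refl t : hs_eq t t
  | hs_sym s t : hs_eq s t -> hs_eq t s
  | hs_trans s t u : hs_eq s t -> hs_eq t u -> hs_eq s u
  | hs_addC s s' t t' : hs_eq s s' -> hs_eq t t' -> hs_eq (HAdd s t) (HAdd s' t')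
  | hs_oppC s s' : hs_eq s s' -> hs_eq (HOpp s) (HOpp s')
  | hs_mulC s s' t t' : hs_eq s s' -> hs_eq t t' -> hs_eq (HMul s t) (HMul s' t')
  | hs_addA s t u : hs_eq (HAdd s (HAdd t u)) (HAdd (HAdd s t) u)
  | hs_addComm s t : hs_eq (HAdd s t) (HAdd t s)
  | hs_add0 s : hs_eq (HAdd HZero s) s
  | hs_addN s : hs_eq (HAdd (HOpp s) s) HZero
  | hs_mulA s t u : hs_eq (HMul s (HMul t u)) (HMul (HMul s t) u)
  | hs_mulComm s t : hs_eq (HMul s t) (HMul t s)
  | hs_mul1 s : hs_eq (HMul HOne s) s
  | hs_mulDl s t u : hs_eq (HMul (HAdd s t) u) (HAdd (HMul s u) (HMul t u))
  | hs_dadd a b n : le_m m n ->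
      hs_eq (HVar (addT a b) n) (HAdd (HVar a n) (HVar b n))
  | hs_dmul a b n : le_m m n ->
      hs_eq (HVar (mulT a b) n)
            (hsum [seq HMul (HVar a i) (HVar b (n - i)) | i <- iota 0 n.+1])
  | hs_done : hs_eq (HVar oneT 0) HOne
  | hs_dkill a n : ~~ le_m m n -> hs_eq (HVar a n) HZero
  | hs_extra s t : E s t -> hs_eq s t.
End HS.

(* The ring A = k[[pi]]/(pi^(m+1)) as coefficient sequences vanishing beyond m. *)
Section Trunc.
Variables (k : comPzRingType) (m : option nat).

Definition trunc_ok (f : nat -> k) : Prop := forall i, ~~ le_m m i -> f i = 0.
Definition TS : Type := {f : nat -> k | trunc_ok f}.
Definition ts_coef (a : TS) (i : nat) : k := proj1_sig a i.

Lemma ts_mk_ok (f : nat -> k) : trunc_ok (fun i => if le_m m i then f i else 0).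
Proof. by move=> i /negbTE ->. Qed.

Definition ts_mk (f : nat -> k) : TS :=
  exist _ (fun i => if le_m m i then f i else 0) (ts_mk_ok f).

Definition ts_add (a b : TS) : TS := ts_mk (fun i => ts_coef a i + ts_coef b i).
Definition ts_mul (a b : TS) : TS :=
  ts_mk (fun i => \sum_(j < i.+1) ts_coef a j * ts_coef b (i - j)).
Definition ts_one : TS := ts_mk (fun i => (i == 0)%N%:R).
Definition ts_const (c : k) : TS := ts_mk (fun i => if i == 0%N then c else 0).
Definition ts_pipow (j : nat) : TS := ts_mk (fun i => (i == j)%:R).

Definition HSk_eq : hterm k -> hterm k -> Prop :=
  hs_eq k +%R *%R 1 m (fun _ _ => False).
Definition HSA_eq : hterm TS -> hterm TS -> Prop :=
  hs_eq TS ts_add ts_mul ts_one m (fun _ _ => False).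
Definition Jrel (s t : hterm TS) : Prop :=
  exists n i, le_m m n /\ s = HVar (ts_pipow i) n /\
              t = (if n == i then HOne else HZero).
Definition HSAJ_eq : hterm TS -> hterm TS -> Prop :=
  hs_eq TS ts_add ts_mul ts_one m Jrel.

Definition iota_hs : hterm k -> hterm TS := hmap (fun a n => HVar (ts_const a) n).

Definition phibar_gen (a : TS) (n : nat) : hterm k :=
  if le_m m n then hsum [seq HVar (ts_coef a i) (n - i) | i <- iota 0 n.+1]
  else HZero.
Definition phibar : hterm TS -> hterm k := hmap phibar_gen.
End Trunc.

(* A family [v : T -> nat -> S] satisfying the defining relations of HS^m(T)
   (a Hasse-Schmidt system) is the same thing as a ring map out of HS^m(T),
   namely evaluation of terms at [v].  The pi-linear extension
   [a |-> \sum_i v a_i (n - i)] of a system [v] on [k] is a system on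
   A = k[[pi]]/(pi^(m+1)); for the universal system d^[.] of [k] it is phibar,
   which is thereby well defined, left inverse to iota, and zero on J since it
   sends d^[n] pi^i to delta_ni.  Conversely, a system on A that takes the
   values delta_ni on the powers of pi, such as d^[.] in HS^m(A)/J, is the
   pi-linear extension of its restriction to [k] (write a = a_0 + pi a' and
   induct on n), so rho (phibar u) = u and rho is inverse to phibar#. *)

From HB Require Import structures.
From mathcomp Require Import all_boot all_algebra.
From mathcomp Require Import boolp.
Set Implicit Arguments. Unset Strict Implicit. Unset Printing Implicit Defensive.
Import GRing.Theory.
Local Open Scope ring_scope.

Lemma le_m0 m : le_m m 0.
Proof. by case: m. Qed.

Lemma le_m_leq m n i : le_m m n -> (i <= n)%N -> le_m m i.
Proof. by case: m => //= M hn hi; apply: leq_trans hi hn. Qed.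

Lemma le_m_ord m n (i : 'I_n.+1) : le_m m n -> le_m m i.
Proof. by move/le_m_leq; apply; rewrite -ltnS. Qed.

Lemma le_m_subn m n i : le_m m n -> le_m m (n - i).
Proof. by move=> hn; apply: le_m_leq hn (leq_subr _ _). Qed.

Lemma big_iota_ord (V : nmodType) n (F : nat -> V) :
  \sum_(i <- iota 0 n) F i = \sum_(i < n) F i.
Proof. by rewrite -(big_mkord xpredT) /index_iota subn0. Qed.

Section Evaluation.
Variables (T : Type) (S : pzRingType).

Fixpoint heval (v : T -> nat -> S) (t : hterm T) : S :=
  match t with
  | HVar a n => v a n
  | HZero => 0
  | HOne => 1
  | HAdd s u => heval v s + heval v u
  | HOpp s => - heval v s
  | HMul s u => heval v s * heval v u
  end.

Lemma eq_heval v w : v =2 w -> heval v =1 heval w.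
Proof. by move=> vw; elim=> //= [s -> u ->|s ->|s -> u ->]. Qed.

Lemma heval_hsum v l : heval v (hsum l) = \sum_(t <- l) heval v t.
Proof. by elim: l => [|t l IH]; rewrite ?big_nil ?big_cons //= IH. Qed.

End Evaluation.

Lemma heval_hmap (T U : Type) (S : pzRingType) (f : U -> nat -> hterm T)
    (v : T -> nat -> S) t :
  heval v (hmap f t) = heval (fun a n => heval v (f a n)) t.
Proof. by elim: t => //= [s -> u ->|s ->|s -> u ->]. Qed.

Section HasseSchmidtSystems.
Variables (T : Type) (addT mulT : T -> T -> T) (oneT : T) (m : option nat).
Variable S : comPzRingType.

Definition hs_system (v : T -> nat -> S) : Prop :=
  [/\ forall a b n, le_m m n -> v (addT a b) n = v a n + v b n,
      forall a b n, le_m m n ->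
        v (mulT a b) n = \sum_(i < n.+1) v a i * v b (n - i)%N,
      v oneT 0 = 1 &
      forall a n, ~~ le_m m n -> v a n = 0].

Lemma heval_hs_eq (E : hterm T -> hterm T -> Prop) v :
  hs_system v -> (forall s t, E s t -> heval v s = heval v t) ->
  forall s t, hs_eq T addT mulT oneT m E s t -> heval v s = heval v t.
Proof.
case=> vD vM v1 v0 vE s t; elim=> //.
- by move=> ? ? ? _ -> _ ->.
- by move=> ? ? ? ? _ /= -> _ ->.
- by move=> ? ? _ /= ->.
- by move=> ? ? ? ? _ /= -> _ ->.
- by move=> *; rewrite /= addrA.
- by move=> *; rewrite /= addrC.
- by move=> *; rewrite /= add0r.
- by move=> *; rewrite /= addNr.
- by move=> *; rewrite /= mulrA.
- by move=> *; rewrite /= mulrC.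
- by move=> *; rewrite /= mul1r.
- by move=> *; rewrite /= mulrDl.
- by move=> a b n hn; rewrite heval_hsum big_map big_iota_ord /= vM.
Qed.

End HasseSchmidtSystems.

Lemma hs_system_comp (T U : Type) (addT mulT : T -> T -> T) (oneT : T)
    (addU mulU : U -> U -> U) (oneU : U) m (S : comPzRingType)
    (f : T -> U) (w : U -> nat -> S) :
  {morph f : a b / addT a b >-> addU a b} -> {morph f : a b / mulT a b >-> mulU a b} ->
  f oneT = oneU -> hs_system addU mulU oneU m w ->
  hs_system addT mulT oneT m (fun a n => w (f a) n).
Proof.
move=> fD fM f1 [wD wM w1 w0]; split=> [a b n|a b n||a n].
- by rewrite fD; apply: wD.
- by rewrite fM; apply: wM.
- by rewrite f1.
- exact: w0.
Qed.

Section QuotientRing.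
Variables (T : Type) (addT mulT : T -> T -> T) (oneT : T) (m : option nat).
Variable E : hterm T -> hterm T -> Prop.
Local Notation hs_rel := (hs_eq T addT mulT oneT m E).

Definition HSring : Type := {P : hterm T -> Prop | exists t, P = hs_rel t}.

Definition hs_cls (t : hterm T) : HSring := exist _ (hs_rel t) (ex_intro _ t erefl).

Definition hs_repr (x : HSring) : hterm T := projT1 (cid (proj2_sig x)).

Lemma HSring_inj (x y : HSring) : sval x = sval y -> x = y.
Proof.
by case: x y => [P hP] [Q hQ] /= PQ; subst Q; rewrite (Prop_irrelevance hP hQ).
Qed.

Lemma hs_reprK : cancel hs_repr hs_cls.
Proof. by case=> P hP; apply: HSring_inj; rewrite /hs_repr /=; case: (cid hP). Qed.

Lemma hs_clsP s t : hs_cls s = hs_cls t <-> hs_rel s t.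
Proof.
split=> [/(congr1 sval) /= st | st].
  by rewrite st; apply: hs_refl.
apply: HSring_inj; apply: funext => u; apply: propext.
by split; [apply: hs_trans; apply: hs_sym | apply: hs_trans].
Qed.

Lemma hs_repr_cls t : hs_rel (hs_repr (hs_cls t)) t.
Proof. by apply/hs_clsP; rewrite hs_reprK. Qed.

Definition hs_add x y := hs_cls (HAdd (hs_repr x) (hs_repr y)).
Definition hs_opp x := hs_cls (HOpp (hs_repr x)).
Definition hs_mul x y := hs_cls (HMul (hs_repr x) (hs_repr y)).

Lemma hs_addE s t : hs_add (hs_cls s) (hs_cls t) = hs_cls (HAdd s t).
Proof. by apply/hs_clsP; apply: hs_addC; apply: hs_repr_cls. Qed.

Lemma hs_oppE s : hs_opp (hs_cls s) = hs_cls (HOpp s).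
Proof. by apply/hs_clsP; apply: hs_oppC; apply: hs_repr_cls. Qed.

Lemma hs_mulE s t : hs_mul (hs_cls s) (hs_cls t) = hs_cls (HMul s t).
Proof. by apply/hs_clsP; apply: hs_mulC; apply: hs_repr_cls. Qed.

Lemma hs_cls_ind (P : HSring -> Prop) : (forall t, P (hs_cls t)) -> forall x, P x.
Proof. by move=> Pt x; rewrite -(hs_reprK x). Qed.

Lemma hs_addrA : associative hs_add.
Proof. by do 3!elim/hs_cls_ind=> ?; rewrite !hs_addE; apply/hs_clsP/hs_addA. Qed.

Lemma hs_addrC : commutative hs_add.
Proof. by do 2!elim/hs_cls_ind=> ?; rewrite !hs_addE; apply/hs_clsP/hs_addComm. Qed.

Lemma hs_add0r : left_id (hs_cls HZero) hs_add.
Proof. by elim/hs_cls_ind=> ?; rewrite hs_addE; apply/hs_clsP/hs_add0. Qed.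

Lemma hs_addNr : left_inverse (hs_cls HZero) hs_opp hs_add.
Proof. by elim/hs_cls_ind=> ?; rewrite hs_oppE hs_addE; apply/hs_clsP/hs_addN. Qed.

Lemma hs_mulrA : associative hs_mul.
Proof. by do 3!elim/hs_cls_ind=> ?; rewrite !hs_mulE; apply/hs_clsP/hs_mulA. Qed.

Lemma hs_mulrC : commutative hs_mul.
Proof. by do 2!elim/hs_cls_ind=> ?; rewrite !hs_mulE; apply/hs_clsP/hs_mulComm. Qed.

Lemma hs_mul1r : left_id (hs_cls HOne) hs_mul.
Proof. by elim/hs_cls_ind=> ?; rewrite hs_mulE; apply/hs_clsP/hs_mul1. Qed.

Lemma hs_mulrDl : left_distributive hs_mul hs_add.
Proof.
by do 3!elim/hs_cls_ind=> ?; rewrite !(hs_addE, hs_mulE); apply/hs_clsP/hs_mulDl.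
Qed.

HB.instance Definition _ := gen_eqMixin HSring.
HB.instance Definition _ := gen_choiceMixin HSring.
HB.instance Definition _ :=
  GRing.isZmodule.Build HSring hs_addrA hs_addrC hs_add0r hs_addNr.
HB.instance Definition _ :=
  GRing.Zmodule_isComPzRing.Build HSring hs_mulrA hs_mulrC hs_mul1r hs_mulrDl.

Lemma hs_clsD s t : hs_cls (HAdd s t) = hs_cls s + hs_cls t.
Proof. exact: esym (hs_addE s t). Qed.

Lemma hs_clsN s : hs_cls (HOpp s) = - hs_cls s.
Proof. exact: esym (hs_oppE s). Qed.

Lemma hs_clsM s t : hs_cls (HMul s t) = hs_cls s * hs_cls t.
Proof. exact: esym (hs_mulE s t). Qed.

Definition hs_var (a : T) (n : nat) : HSring := hs_cls (HVar a n).

Lemma hs_cls_heval t : hs_cls t = heval hs_var t.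
Proof.
elim: t => [| | |s IHs u IHu|s IHs|s IHs u IHu] //=;
  by rewrite ?hs_clsD ?hs_clsN ?hs_clsM ?IHs ?IHu.
Qed.

Lemma hs_system_var : hs_system addT mulT oneT m hs_var.
Proof.
split=> [a b n hn|a b n hn||a n hn].
- by rewrite -hs_clsD; apply/hs_clsP/hs_dadd.
- rewrite {1}/hs_var (iffRL (hs_clsP _ _) (hs_dmul _ addT _ oneT _ E a b _ hn)).
  by rewrite hs_cls_heval heval_hsum big_map big_iota_ord.
- exact/hs_clsP/hs_done.
- exact/hs_clsP/hs_dkill.
Qed.

End QuotientRing.

Lemma big_triangle (V : nmodType) N (h : nat -> nat -> V) :
  \sum_(i < N) \sum_(j < i.+1) h j (i - j)%N = \sum_(j < N) \sum_(u < N - j) h j u.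
Proof.
elim: N => [|N IH]; first by rewrite !big_ord0.
rewrite big_ord_recr /= IH [RHS]big_ord_recr /= subSnn big_ord1.
rewrite [\sum_(j < N.+1) _]big_ord_recr /= subnn addrA; congr (_ + _).
rewrite -big_split /=; apply: eq_bigr => j _.
by rewrite subSn ?big_ord_recr //= ltnW.
Qed.

Lemma big_triangleC (V : nmodType) M (G : nat -> nat -> V) :
  \sum_(a < M.+1) \sum_(b < M.+1 - a) G a b = \sum_(b < M.+1) \sum_(a < M.+1 - b) G a b.
Proof.
rewrite -big_triangle -(big_triangle _ (fun b a => G a b)); apply: eq_bigr => i _.
rewrite (reindex_inj rev_ord_inj) /=; apply: eq_bigr => a _.
by rewrite subSS subKn // -ltnS.
Qed.

(* Writing [j + u + j' + u' = n], both sides enumerate the same terms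
   [A j u * B j' u']. *)
Lemma big_diag_conv (R : comPzRingType) (A B : nat -> nat -> R) n :
  \sum_(i < n.+1) \sum_(j < i.+1) \sum_(u < (n - i).+1) A j u * B (i - j)%N (n - i - u)%N
  = \sum_(s < n.+1) (\sum_(j < s.+1) A j (s - j)%N) *
                    (\sum_(j < (n - s).+1) B j (n - s - j)%N).
Proof.
pose Bd r := \sum_(j < r.+1) B j (r - j)%N.
pose g j j' := \sum_(u < (n - (j + j')).+1) A j u * B j' (n - (j + j') - u)%N.
pose f j u := A j u * Bd (n - (j + u))%N.
transitivity (\sum_(i < n.+1) \sum_(j < i.+1) g j (i - j)%N).
  by apply: eq_bigr => i _; apply: eq_bigr => j _; rewrite /g subnKC // -ltnS.
transitivity (\sum_(s < n.+1) \sum_(j < s.+1) f j (s - j)%N); last first.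
  apply: eq_bigr => s _; rewrite mulr_suml.
  by apply: eq_bigr => j _; rewrite /f subnKC // -ltnS.
rewrite !big_triangle; apply: eq_bigr => j _; rewrite (subSn (ltnSE (ltn_ord j))).
transitivity (\sum_(j' < (n - j).+1) \sum_(u < (n - j).+1 - j')
    A j u * B j' (n - j - j' - u)%N).
  by apply: eq_bigr => j' _; rewrite /g subnDA -(subSn (ltnSE (ltn_ord j'))).
rewrite (big_triangleC _ (fun j' u => A j u * B j' (n - j - j' - u)%N)).
apply: eq_bigr => u _.
rewrite /f /Bd mulr_sumr subnDA (subSn (ltnSE (ltn_ord u))); apply: eq_bigr => j' _.
by rewrite (subnAC (n - j)%N j' u).
Qed.

Section HasseSchmidtOnRings.
Variables (k S : comPzRingType) (m : option nat) (v : k -> nat -> S).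
Hypothesis hv : hs_system +%R *%R 1 m v.

Lemma hs_system0 n : v 0 n = 0.
Proof.
have [vD _ _ v0] := hv; have [hn|/v0 //] := boolP (le_m m n).
by move/esym: (vD 0 0 n hn); rewrite addr0 -{3}[v 0 n]addr0 => /addrI.
Qed.

Lemma hs_system_sum I (r : seq I) (P : pred I) (F : I -> k) n :
  v (\sum_(i <- r | P i) F i) n = \sum_(i <- r | P i) v (F i) n.
Proof.
have [vD _ _ v0] := hv; have [hn|hn] := boolP (le_m m n).
  by apply: (big_morph (v^~ n)) => [a b|]; [exact: vD | exact: hs_system0].
by rewrite v0 // big1 // => i _; rewrite v0.
Qed.

Lemma hs_system1 n : v 1 n = (n == 0)%:R.
Proof.
have [_ vM v1 v0] := hv; elim/ltn_ind: n => -[_ //|n IH].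
have [hn|/v0 //] := boolP (le_m m n.+1).
have := vM 1 1 n.+1 hn; rewrite mulr1 big_ord_recl big_ord_recr big1 => [|i _];
  rewrite /= /bump !add1n; last by rewrite IH ?mul0r // ltnS.
rewrite subn0 subnn v1 mul1r mulr1 add0r -{1}[v 1 n.+1]addr0.
by move/addrI/esym.
Qed.

End HasseSchmidtOnRings.

Section TruncatedSeries.
Variables (k : comPzRingType) (m : option nat).
Local Notation A := (TS k m).
Local Notation coef := (@ts_coef k m).
Local Notation const := (ts_const k m).
Local Notation pipow := (ts_pipow k m).

Lemma ts_mkE f i : le_m m i -> coef (ts_mk k m f) i = f i.
Proof. by rewrite /ts_coef /= => ->. Qed.

Lemma ts_const0 c : coef (const c) 0 = c.
Proof. by rewrite ts_mkE ?le_m0. Qed.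

Lemma ts_constS c i : coef (const c) i.+1 = 0.
Proof. by rewrite /ts_coef /=; case: ifP. Qed.

Lemma ts_ext (a b : A) : (forall i, le_m m i -> coef a i = coef b i) -> a = b.
Proof.
case: a b => [f hf] [g hg] /= fg.
have ef : f = g.
  by apply: funext => i; have [/fg|hi] := boolP (le_m m i); last by rewrite hf ?hg.
by subst g; rewrite (Prop_irrelevance hf hg).
Qed.

Lemma ts_const_add : {morph const : a b / a + b >-> ts_add k m a b}.
Proof.
move=> a b; apply: ts_ext => i hi; rewrite !ts_mkE //.
by case: i {hi} => [|i]; rewrite ?ts_const0 ?ts_constS ?addr0.
Qed.

Lemma ts_const_mul : {morph const : a b / a * b >-> ts_mul k m a b}.
Proof.
move=> a b; apply: ts_ext => i hi; rewrite !ts_mkE // big_ord_recl big1 => [|j _].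
  rewrite addr0 ts_const0 subn0.
  by case: i {hi} => [|i]; rewrite ?ts_const0 ?ts_constS ?mulr0.
by rewrite lift0 ts_constS mul0r.
Qed.

Lemma ts_const_one : const 1 = ts_one k m.
Proof. by apply: ts_ext => i hi; rewrite !ts_mkE //; case: (i == 0)%N. Qed.

Definition ts_shift (a : A) : A := ts_mk k m (fun i => coef a i.+1).

Lemma ts_decomp a : a = ts_add k m (const (coef a 0)) (ts_mul k m (pipow 1) (ts_shift a)).
Proof.
apply: ts_ext => -[|i] hi; rewrite !ts_mkE //.
  by rewrite big_ord1 !ts_mkE ?le_m0 // mul0r addr0.
have hi1 : le_m m 1 by apply: le_m_leq hi _.
rewrite add0r big_ord_recl big_ord_recl big1 => [|j _]; last first.
  by rewrite ts_mkE ?(le_m_ord _ hi) // !lift0 mul0r.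
rewrite !lift0 !ts_mkE ?le_m0 ?(le_m_subn _ hi) //=.
by rewrite mulr0n mulr1n mul0r mul1r add0r addr0 subn1.
Qed.

Variable S : comPzRingType.

(* For [v] the universal system of [k], this is the paper's [phi]. *)
Definition ts_hs (v : k -> nat -> S) (a : A) (n : nat) : S :=
  if le_m m n then \sum_(i < n.+1) v (coef a i) (n - i)%N else 0.

Lemma heval_phibar_gen v a n : heval v (phibar_gen k m a n) = ts_hs v a n.
Proof.
by rewrite /phibar_gen /ts_hs; case: ifP => // _; rewrite heval_hsum big_map big_iota_ord.
Qed.

Section Extension.
Variable v : k -> nat -> S.
Hypothesis hv : hs_system +%R *%R 1 m v.

Lemma ts_hs_const c n : ts_hs v (const c) n = v c n.
Proof.
have [_ _ _ v0] := hv; rewrite /ts_hs; have [hn|/v0 //] := boolP (le_m m n).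
rewrite big_ord_recl big1 => [|j _]; first by rewrite ts_const0 subn0 addr0.
by rewrite lift0 ts_constS (hs_system0 hv).
Qed.

Lemma ts_hs_pipow i n : le_m m n -> ts_hs v (pipow i) n = (n == i)%:R.
Proof.
move=> hn; rewrite /ts_hs hn.
transitivity (\sum_(j < n.+1 | j == i :> nat) v 1 (n - j)%N).
  rewrite [RHS]big_mkcond; apply: eq_bigr => j _.
  rewrite ts_mkE ?(le_m_ord _ hn) //.
  by case: eqP; rewrite ?(hs_system0 hv).
rewrite (big_ord1_eq _ (fun j => v 1 (n - j)%N)) (hs_system1 hv).
case: ltnP => [|ni]; last by rewrite ltn_eqF.
by rewrite ltnS subn_eq0 eqn_leq => ->; rewrite andbT.
Qed.

Lemma hs_system_ts : hs_system (ts_add k m) (ts_mul k m) (ts_one k m) m (ts_hs v).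
Proof.
have [vD vM v1 _] := hv.
split=> [a b n hn|a b n hn||a n /negbTE hn]; rewrite /ts_hs ?hn ?le_m0 //.
- rewrite -big_split; apply: eq_bigr => i _.
  by rewrite ts_mkE ?(le_m_ord _ hn) // vD // le_m_subn.
- transitivity (\sum_(i < n.+1) \sum_(j < i.+1) \sum_(u < (n - i).+1)
      v (coef a j) u * v (coef b (i - j)) (n - i - u)%N).
    apply: eq_bigr => i _; rewrite ts_mkE ?(le_m_ord _ hn) // (hs_system_sum hv).
    apply: eq_bigr => j _.
    by rewrite vM // le_m_subn.
  rewrite (big_diag_conv (fun j u => v (coef a j) u) (fun j u => v (coef b j) u)).
  by apply: eq_bigr => i _; rewrite (le_m_ord _ hn) le_m_subn.
- by rewrite big_ord1 -ts_const_one ts_const0 sub0n v1.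
Qed.

End Extension.

Lemma hs_system_ts_restriction (w : A -> nat -> S) :
    hs_system (ts_add k m) (ts_mul k m) (ts_one k m) m w ->
    (forall i n, le_m m n -> w (pipow i) n = (n == i)%:R) ->
  forall a n, w a n = ts_hs (fun c => w (const c)) a n.
Proof.
move=> [wD wM _ w0] wpi a n; rewrite /ts_hs.
have [hn|/w0 //] := boolP (le_m m n).
elim: n a hn => [|n IH] a hn;
  rewrite {1}(ts_decomp a) wD // wM // big_ord_recl wpi ?le_m0 //.
  by rewrite big_ord0 big_ord1 mul0r !addr0.
rewrite mul0r add0r big_ord_recl big1 => [|i _]; last first.
  by rewrite wpi ?(le_m_ord _ hn) // !lift0 mul0r.
have hn' : le_m m n by apply: le_m_leq hn _.
rewrite wpi ?lift0 ?(le_m_leq hn) // mul1r addr0 subn1 IH // [RHS]big_ord_recl.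
by congr (_ + _); apply: eq_bigr => i _; rewrite ts_mkE ?(le_m_ord _ hn').
Qed.

End TruncatedSeries.

Section Proposition.
Variables (k : comPzRingType) (m : option nat).
Local Notation A := (TS k m).
Local Notation Ek := (fun _ _ : hterm k => False).
Local Notation HSk_cls := (@hs_cls k +%R *%R 1 m Ek).
Local Notation dk := (@hs_var k +%R *%R 1 m Ek).
Local Notation HSA_rel E := (hs_eq A (ts_add k m) (ts_mul k m) (ts_one k m) m E).
Local Notation HSA_cls E := (@hs_cls A (ts_add k m) (ts_mul k m) (ts_one k m) m E).
Local Notation HSA_var E := (@hs_var A (ts_add k m) (ts_mul k m) (ts_one k m) m E).
Local Notation phibar := (phibar k m).
Local Notation iota_hs := (iota_hs k m).

Lemma hs_cls_phibar s : HSk_cls (phibar s) = heval (ts_hs dk) s.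
Proof.
by rewrite hs_cls_heval heval_hmap; apply: eq_heval => a n; apply: heval_phibar_gen.
Qed.

Lemma hs_cls_iota E t :
  HSA_cls E (iota_hs t) = heval (fun c => HSA_var E (ts_const k m c)) t.
Proof. by rewrite hs_cls_heval heval_hmap. Qed.

Lemma phibar_hs_eq E : (forall s t, E s t -> heval (ts_hs dk) s = heval (ts_hs dk) t) ->
  forall s t, HSA_rel E s t -> HSk_eq k m (phibar s) (phibar t).
Proof.
move=> hE s t st; apply/hs_clsP; rewrite !hs_cls_phibar.
exact: heval_hs_eq (hs_system_ts (hs_system_var _ _ _ _ _)) hE _ _ st.
Qed.

Lemma Jrel_phibar s t : Jrel k m s t -> heval (ts_hs dk) s = heval (ts_hs dk) t.
Proof.
case=> n [i [hn [-> ->]]]; rewrite /= ts_hs_pipow //; last exact: hs_system_var.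
by case: eqP.
Qed.

Lemma iota_hs_eq s t : HSk_eq k m s t -> HSA_eq k m (iota_hs s) (iota_hs t).
Proof.
move=> st; apply/hs_clsP; rewrite !hs_cls_iota; apply: heval_hs_eq st => //.
exact: hs_system_comp (@ts_const_add k m) (@ts_const_mul k m) (ts_const_one k m)
  (hs_system_var _ _ _ _ _).
Qed.

Lemma phibar_iota t : HSk_cls (phibar (iota_hs t)) = HSk_cls t.
Proof.
rewrite hs_cls_phibar heval_hmap [RHS]hs_cls_heval; apply: eq_heval => c n /=.
exact/ts_hs_const/hs_system_var.
Qed.

Lemma HSA_var_pipow i n : le_m m n -> HSA_var (Jrel k m) (ts_pipow k m i) n = (n == i)%:R.
Proof.
move=> hn; have -> : HSA_var (Jrel k m) (ts_pipow k m i) n =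
                     HSA_cls (Jrel k m) (if n == i then HOne else HZero).
  by apply/hs_clsP/hs_extra; exists n, i.
by case: eqP.
Qed.

Lemma iota_phibar u : HSA_cls (Jrel k m) (iota_hs (phibar u)) = HSA_cls (Jrel k m) u.
Proof.
rewrite hs_cls_iota heval_hmap [RHS]hs_cls_heval; apply: eq_heval => a n.
rewrite heval_phibar_gen; symmetry; apply: hs_system_ts_restriction.
  exact: hs_system_var.
exact: HSA_var_pipow.
Qed.

End Proposition.

Theorem proposition6p5 (p : nat) (k : comPzRingType) (m : option nat) :
  prime p -> (p%:R : k) = 0 ->
  ((* phibar is a well-defined ring map HS^m(A) -> HS^m(k) *)
      (forall s t, HSA_eq k m s t -> HSk_eq k m (phibar k m s) (phibar k m t)) /\
      (* iota is a well-defined map HS^m(k) -> HS^m(A), and rho into HS^m(A)/J *)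
      (forall s t, HSk_eq k m s t -> HSA_eq k m (iota_hs k m s) (iota_hs k m t)) /\
      (* phibar o iota = id *)
      (forall t, HSk_eq k m (phibar k m (iota_hs k m t)) t) /\
      (* phibar vanishes on J ... *)
      (forall n i, le_m m n ->
         HSk_eq k m (phibar k m (HAdd (HVar (ts_pipow k m i) n)
                                  (HOpp (if n == i then HOne else HZero)))) HZero) /\
      (* ... hence induces phibar# : HS^m(A)/J -> HS^m(k) (and phibar# o rho = id
         is the third item) *)
      (forall s t, HSAJ_eq k m s t -> HSk_eq k m (phibar k m s) (phibar k m t)) /\
      (* rho is injective *)
      (forall s t, HSAJ_eq k m (iota_hs k m s) (iota_hs k m t) -> HSk_eq k m s t) /\
      (* rho is surjective, hence an isomorphism *)
      (forall u, exists t, HSAJ_eq k m (iota_hs k m t) u)).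
Proof.
move=> _ _.
split; first exact: phibar_hs_eq.
split; first exact: iota_hs_eq.
split; first by move=> t; apply/hs_clsP; rewrite phibar_iota.
split.
  move=> n i hn; apply/hs_clsP; rewrite hs_cls_phibar /= ts_hs_pipow //.
    by case: eqP; rewrite subrr.
  exact: hs_system_var.
split; first exact: phibar_hs_eq (@Jrel_phibar k m).
split.
  move=> s t /(phibar_hs_eq (@Jrel_phibar k m)) /hs_clsP.
  by rewrite !phibar_iota => /hs_clsP.
by move=> u; exists (phibar k m u); apply/hs_clsP; rewrite iota_phibar.
Qed.
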